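(* Let $P=\{S_1,\ldots,S_n\}$ be a homothetic packing of $n$ squares with contact graph $G=([n],E)$. If $K,K'$ are two distinct cliques of $G$ each of size $4$, then $|K\cap K'|\le 2$.
   Context: Let $S=\{(x,y): -1\le x,y\le 1\}$. A homothetic packing of $n$ squares is a set $P=\{S_1,\ldots,S_n\}$ with $S_i=r_iS+p_i$, $r_i>0$, $p_i\in\mathbb{R}^2$, such that distinct squares have disjoint interiors. Its contact graph is $G=([n],E)$ where $\{i,j\}\in E$ iff $i\ne j$ and $S_i\cap S_j\ne\emptyset$. *)

From HB Require Import structures.
From mathcomp Require Import all_boot all_order all_algebra.
From mathcomp Require Import reals.
Set Implicit Arguments. Unset Strict Implicit. Unset Printing Implicit Defensive.
Import Order.TTheory GRing.Theory Num.Theory.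
Local Open Scope ring_scope.

(* The standard square is
   S = {(x,y) : -1 <= x, y <= 1}; the homothetic copy r S + p (r > 0) is the
   set of points q with |q.x - p.x| <= r and |q.y - p.y| <= r. *)
Definition in_square (R : realType) (r : R) (p q : R * R) : Prop :=
  `|q.1 - p.1| <= r /\ `|q.2 - p.2| <= r.

Definition in_square_interior (R : realType) (r : R) (p q : R * R) : Prop :=
  `|q.1 - p.1| < r /\ `|q.2 - p.2| < r.

Definition homothetic_packing (R : realType) (n : nat)
    (r : 'I_n -> R) (p : 'I_n -> R * R) : Prop :=
  (forall i, 0 < r i) /\
  (forall i j, i != j ->
     ~ (exists q, in_square_interior (r i) (p i) q /\
                  in_square_interior (r j) (p j) q)).

Definition contact_edge (R : realType) (n : nat)
    (r : 'I_n -> R) (p : 'I_n -> R * R) (i j : 'I_n) : Prop :=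
  i != j /\ exists q, in_square (r i) (p i) q /\ in_square (r j) (p j) q.

Definition contact_clique (R : realType) (n : nat)
    (r : 'I_n -> R) (p : 'I_n -> R * R) (K : {set 'I_n}) : Prop :=
  forall i j, i \in K -> j \in K -> i != j -> contact_edge r p i j.

From HB Require Import structures.
From mathcomp Require Import all_boot all_order all_algebra.
From mathcomp Require Import reals ring lra.
Import Order.TTheory GRing.Theory Num.Theory.

(* Two squares with disjoint interiors are separated along some axis, so if
   both contain a point q then, along that axis, q lies on opposite sides of
   the two squares.  Pairwise touching squares have a common point (Helly in
   each coordinate).  If four pairwise separated squares contain q, then q is
   a corner of each of them, and they occupy the four quadrants at q.  Now let
   K, K' be 4-cliques sharing three squares a, b, c, with common points q, q'.
   Two of a, b, c sit in opposite quadrants at q, and two such squares meet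
   only at q, hence q' = q.  A square e of K' outside K must then share its
   quadrant at q with some square of K, which is impossible. *)

Section SquareContacts.
Set Implicit Arguments. Unset Strict Implicit. Unset Printing Implicit Defensive.
Local Open Scope ring_scope.

Section Intervals.
Variable R : realFieldType.
Implicit Types c r t : R.

Definition apart c r c' r' := r + r' <= `|c - c'|.

Lemma apart_touch c r c' r' t : 0 < r -> 0 < r' ->
  `|t - c| <= r -> `|t - c'| <= r' -> apart c r c' r' ->
  [/\ `|t - c| = r, `|t - c'| = r' & (c' < t) = ~~ (c < t)].
Proof.
rewrite /apart ler_normr.
by case: (ltrP c t) => ?; case: (ltrP c' t) => ?; case: (ltrP c' c) => ? /= *;
  try (exfalso; lra); split => //; lra.
Qed.

Lemma touching_ends_meet_only c r c' r' s t :
  `|t - c| = r -> `|t - c'| = r' -> (c' < t) = ~~ (c < t) ->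
  `|s - c| <= r -> `|s - c'| <= r' -> s = t.
Proof.
rewrite !ler_norml.
by case: (ltrP c t) => ?; case: (ltrP c' t) => ? //= *; lra.
Qed.

Lemma interior_witness c r c' r' : 0 < r -> 0 < r' -> `|c - c'| < r + r' ->
  exists t, `|t - c| < r /\ `|t - c'| < r'.
Proof.
move=> r0 r'0 cc'; have rr'0 : 0 < r + r' by lra.
exists ((c * r' + c' * r) / (r + r')).
have -> : (c * r' + c' * r) / (r + r') - c = (c' - c) * (r / (r + r')).
  by field; rewrite gt_eqF.
have -> : (c * r' + c' * r) / (r + r') - c' = (c - c') * (r' / (r + r')).
  by field; rewrite gt_eqF.
rewrite !normrM (distrC c') normfV (gtr0_norm r0) (gtr0_norm r'0) (gtr0_norm rr'0).
rewrite !mulrA !ltr_pdivrMr //.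
by split; nra.
Qed.

Lemma intervals_common_point (I : finType) (A : {pred I}) (c r : I -> R) :
  (forall i j, i \in A -> j \in A -> `|c i - c j| <= r i + r j) ->
  exists t, forall i, i \in A -> `|t - c i| <= r i.
Proof.
move=> meet; case: (pickP (mem A)) => [k kA|A0]; last first.
  by exists 0 => i; rewrite [_ \in A]A0.
set t := \big[Num.max/c k - r k]_(i in A) (c i - r i).
have above i : i \in A -> c i - r i <= t by move=> iA; apply: le_bigmax_cond.
have below i : i \in A -> t <= c i + r i.
  move=> iA; apply: bigmax_le => [|j jA];
    [have := meet _ _ kA iA | have := meet _ _ jA iA]; by case/ler_normlP => *; lra.
exists t => i iA; have := above i iA; have := below i iA.
by rewrite ler_norml => *; apply/andP; split; lra.
Qed.

End Intervals.

Definition opp_quadrant (u : bool * bool) := (~~ u.1, ~~ u.2).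

Lemma three_quadrants_opposite (u v w : bool * bool) :
  u != v -> v != w -> w != u ->
  [|| v == opp_quadrant u, w == opp_quadrant v | u == opp_quadrant w].
Proof. by case: u v w => [[] []] [[] []] [[] []]. Qed.

Definition coord (R : Type) (k : bool) (x : R * R) := if k then x.1 else x.2.

Lemma coord_inj (R : Type) (x y : R * R) : (forall k, coord k x = coord k y) -> x = y.
Proof. by case: x y => [? ?] [? ?] e; congr pair; [exact: e true | exact: e false]. Qed.

Section Packing.
Variables (R : realType) (n : nat) (r : 'I_n -> R) (p : 'I_n -> R * R).
Hypothesis packing : homothetic_packing r p.
Implicit Types (i j : 'I_n) (q : R * R) (K A : {set 'I_n}).

Lemma in_square_coord (rad : R) (c q : R * R) :
  in_square rad c q <-> forall k, `|coord k q - coord k c| <= rad.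
Proof. by split=> [[? ?] []|h] //; split; [exact: h true | exact: h false]. Qed.

Definition separated i j :=
  exists k, apart (coord k (p i)) (r i) (coord k (p j)) (r j).
Definition corner i q := forall k, `|coord k q - coord k (p i)| = r i.
Definition side k i q := coord k (p i) < coord k q.
Definition quadrant i q := (side true i q, side false i q).

Lemma radius_gt0 i : 0 < r i.
Proof. exact: packing.1. Qed.

Lemma packing_separated i j : i != j -> separated i j.
Proof.
move=> ij; have [|x_close] := leP (r i + r j) `|(p i).1 - (p j).1|; first by exists true.
have [|y_close] := leP (r i + r j) `|(p i).2 - (p j).2|; first by exists false.
have [x [xi xj]] := interior_witness (radius_gt0 i) (radius_gt0 j) x_close.
have [y [yi yj]] := interior_witness (radius_gt0 i) (radius_gt0 j) y_close.
by case: (packing.2 i j ij); exists (x, y).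
Qed.

Lemma separated_touch i j q : i != j ->
  in_square (r i) (p i) q -> in_square (r j) (p j) q ->
  exists k, [/\ `|coord k q - coord k (p i)| = r i,
                `|coord k q - coord k (p j)| = r j & side k j q = ~~ side k i q].
Proof.
move=> /packing_separated[k ij] /in_square_coord qi /in_square_coord qj.
by exists k; apply: apart_touch; rewrite ?radius_gt0.
Qed.

Lemma quadrant_neq i j q : i != j ->
  in_square (r i) (p i) q -> in_square (r j) (p j) q -> quadrant i q != quadrant j q.
Proof.
move=> ij qi qj; have [k [_ _ sji]] := separated_touch ij qi qj.
rewrite /quadrant xpair_eqE; case: k sji => ->;
  [by case: (side true i q) | by case: (side false i q); rewrite andbF].
Qed.

Lemma clique_common_point K : contact_clique r p K ->
  exists q, forall i, i \in K -> in_square (r i) (p i) q.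
Proof.
move=> clique; have meet k i j : i \in K -> j \in K ->
    `|coord k (p i) - coord k (p j)| <= r i + r j.
  move=> iK jK; have [<-|ij] := eqVneq i j.
    by rewrite subrr normr0 addr_ge0 // ltW ?radius_gt0.
  have [_ [q [/in_square_coord qi /in_square_coord qj]]] := clique i j iK jK ij.
  by rewrite (le_trans (ler_distD (coord k q) _ _)) // distrC lerD.
have [x Kx] := intervals_common_point (meet true).
have [y Ky] := intervals_common_point (meet false).
by exists (x, y) => i iK; apply/in_square_coord => -[]; [exact: Kx | exact: Ky].
Qed.

Lemma clique4_corner K q i : #|K| = 4%N ->
  (forall j, j \in K -> in_square (r j) (p j) q) -> i \in K -> corner i q.
Proof.
move=> K4 Kq iK k; apply/eqP; apply: contraT => not_end.
have /card_gt2P[a [b [c [[aK bK cK] [ab bc ca]]]]] : (2 < #|K :\ i|)%N.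
  by move: (cardsD1 i K); rewrite iK K4 add1n => -[<-].
move: aK bK cK; rewrite !in_setD1 => /andP[ai aK] /andP[bi bK] /andP[ci cK].
have other_side j : j != i -> j \in K -> side (~~ k) j q = ~~ side (~~ k) i q.
  rewrite eq_sym => ij jK.
  have [k' [i_end _ s]] := separated_touch ij (Kq i iK) (Kq j jK).
  case: (k' =P k) i_end => [-> i_end | /eqP k'k _]; first by rewrite i_end eqxx in not_end.
  by move: k'k; rewrite negb_eqb addbC => /addbP ->.
have opposite j l : j != l -> j \in K -> l \in K -> j != i -> l != i ->
    side k l q = ~~ side k j q.
  move=> jl jK lK ji li; have [k' [_ _ s]] := separated_touch jl (Kq j jK) (Kq l lK).
  case: (k' =P k) s => [-> // | /eqP]; rewrite negb_eqb addbC => /addbP <-.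
  by rewrite (other_side j) ?(other_side l) //; case: (side (~~ k) i q).
move: (opposite c a ca cK aK ci ai); rewrite (opposite b c) ?(opposite a b) ?negbK //.
by case: (side k a q).
Qed.

Lemma opposite_corners_meet_only i j q q' : corner i q -> corner j q ->
  quadrant j q = opp_quadrant (quadrant i q) ->
  in_square (r i) (p i) q' -> in_square (r j) (p j) q' -> q' = q.
Proof.
move=> ci cj [sj1 sj2] /in_square_coord qi' /in_square_coord qj'.
apply: coord_inj => k; apply: touching_ends_meet_only (ci k) (cj k) _ (qi' k) (qj' k).
by case: k.
Qed.

Lemma clique4_point_unique K A q q' : #|K| = 4%N ->
  (forall i, i \in K -> in_square (r i) (p i) q) -> A \subset K -> (2 < #|A|)%N ->
  (forall i, i \in A -> in_square (r i) (p i) q') -> q' = q.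
Proof.
move=> K4 Kq /subsetP AK /card_gt2P[a [b [c [[aA bA cA] [ab bc ca]]]]] Aq'.
have corner_q i : i \in A -> corner i q by move=> /AK; apply: clique4_corner.
have quadrant_neq_q i j : i != j -> i \in A -> j \in A -> quadrant i q != quadrant j q.
  by move=> ij /AK iK /AK jK; apply: quadrant_neq ij (Kq i iK) (Kq j jK).
have meet_only i j : i \in A -> j \in A ->
    quadrant j q = opp_quadrant (quadrant i q) -> q' = q.
  move=> iA jA qij; apply: opposite_corners_meet_only qij (Aq' i iA) (Aq' j jA).
  - exact: corner_q iA.
  - exact: corner_q jA.
case/or3P: (three_quadrants_opposite (quadrant_neq_q a b ab aA bA)
  (quadrant_neq_q b c bc bA cA) (quadrant_neq_q c a ca cA aA)) => /eqP.
- exact: meet_only aA bA.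
- exact: meet_only bA cA.
- exact: meet_only cA aA.
Qed.

Lemma clique4_quadrant_onto K q u : #|K| = 4%N ->
  (forall i, i \in K -> in_square (r i) (p i) q) -> exists2 i, i \in K & quadrant i q = u.
Proof.
move=> K4 Kq; have quadrant_inj : {in K &, injective (quadrant^~ q)}.
  move=> i j iK jK; apply: contra_eq => ij.
  exact: quadrant_neq ij (Kq i iK) (Kq j jK).
have quadrant_onto : quadrant^~ q @: K = setT.
  by apply/eqP; rewrite eqEcard subsetT cardsT card_in_imset // K4 card_prod card_bool.
have /imsetP[i iK ->] : u \in quadrant^~ q @: K by rewrite quadrant_onto inE.
by exists i.
Qed.

End Packing.

End SquareContacts.

Theorem lemma10 (R : realType) (n : nat) (r : 'I_n -> R) (p : 'I_n -> R * R)
    (K K' : {set 'I_n}) :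
  homothetic_packing r p ->
  contact_clique r p K -> contact_clique r p K' ->
  #|K| = 4 -> #|K'| = 4 -> K != K' ->
  #|K :&: K'| <= 2.
Proof.
move=> packing CK CK' K4 K'4 KK'; rewrite leqNgt; apply/negP => KK'3.
have [q Kq] := clique_common_point packing CK.
have [q' K'q'] := clique_common_point packing CK'.
have q'q : q' = q.
  apply: (clique4_point_unique packing K4 Kq (subsetIl K K') KK'3).
  by move=> i /setIP[_ /K'q'].
subst q'.
have [e eK' eK] : exists2 e, e \in K' & e \notin K.
  by apply/subsetPn; apply: contra KK' => K'K; rewrite eq_sym eqEcard K'K K4 K'4.
have [k kK ke] := clique4_quadrant_onto packing (quadrant p e q) K4 Kq.
have ek : e != k by apply: contraNneq eK => ->.
by move: (quadrant_neq packing ek (K'q' e eK') (Kq k kK)); rewrite ke eqxx.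
Qed.
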